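(* Let $H$ be a Hopf algebra, $E$ an $H$-comodule algebra, and $X\in (E\otimes H)^\times$. Define $\Delta_E^X:E\to E\otimes H$ by $\Delta_E^X(x)=X\Delta_E(x)$. Then (1) $X\in\mathcal{Z}^1(H,E)$ if and only if $(E,\Delta^X_E)$ (with $E$ acting on itself by right multiplication) is an $(H,E)$-Hopf module; (2) two Hopf $1$-cocycles $X,X'$ are cohomologous if and only if the $(H,E)$-Hopf modules $(E,\Delta_E^X)$ and $(E,\Delta_E^{X'})$ are isomorphic.
   Context: $k$ commutative ring, $\otimes=\otimes_k$. An $H$-comodule algebra is an algebra $E$ with coaction $\Delta_E:E\to E\otimes H$ that is an algebra morphism. An $(H,E)$-Hopf module is a right $E$-module $M$ with a right $H$-comodule structure $\Delta_M$ (coassociative, counital) such that $\Delta_M(ms)=\Delta_M(m)\Delta_E(s)$; a morphism is an $E$-linear $H$-colinear map. $d^0(x)=\Delta_E(x)$, $d^1(x)=x\otimes1$ for $x\in E$; $d^0(X)=(\Delta_E\otimes\mathrm{id}_H)(X)$, $d^1(X)=(\mathrm{id}_E\otimes\Delta_H)(X)$, $d^2(X)=X\otimes1$ for $X\in E\otimes H$. $\mathcal{Z}^1(H,E)=\{X\in(E\otimes H)^\times: d^2(X)d^0(X)=d^1(X)\}$; $X,X'$ are cohomologous if $X'=d^1(x^{-1})Xd^0(x)$ for some $x\in E^\times$. *)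

(* Associative unital algebras over a commutative ring k,
   with tensor products given by their universal property (MathComp has no
   tensor product of modules over a general commutative ring). *)
From HB Require Import structures.
From mathcomp Require Import all_boot all_order all_algebra.
Set Implicit Arguments.
Unset Strict Implicit.
Unset Printing Implicit Defensive.
Import GRing.Theory.
Local Open Scope ring_scope.

Section Defs.
Variable k : comPzRingType.

(* A k-algebra: a (possibly zero) ring A with a structure map
   eta : k -> A that is a unital ring morphism landing in the centre.
   (MathComp's algType insists on non-trivial rings, hence this record.)
   The k-module structure is  a *s x := eta a * x. *)
Record pzAlg := PzAlg {
  acarrier :> pzRingType;
  aeta : k -> acarrier;
  aetaD : forall a b, aeta (a + b) = aeta a + aeta b;
  aetaM : forall a b, aeta (a * b) = aeta a * aeta b;
  aeta1 : aeta 1 = 1;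
  aeta_central : forall a (x : acarrier), aeta a * x = x * aeta a
}.

Definition asc (A : pzAlg) (a : k) (x : A) : A := aeta A a * x.
Local Notation "a *s x" := (asc a x) (at level 40).

Definition kAlg : pzAlg :=
  @PzAlg k (fun a => a) (fun _ _ => erefl) (fun _ _ => erefl) erefl
    (fun a x => mulrC a x).

Definition is_linear (U V : pzAlg) (f : U -> V) : Prop :=
  forall (a : k) (u v : U), f (a *s u + v) = a *s f u + f v.

Definition is_bilinear (U W V : pzAlg) (f : U -> W -> V) : Prop :=
  (forall w, is_linear (fun u => f u w)) /\ (forall u, is_linear (f u)).

Definition is_alg_morph (A B : pzAlg) (f : A -> B) : Prop :=
  [/\ is_linear f, (forall x y, f (x * y) = f x * f y) & f 1 = 1].

(* A tensor product A (x) B of k-algebras: a k-algebra T with a k-bilinear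
   map tens : A -> B -> T having the universal property for bilinear maps
   (existence via tlift, uniqueness via tens_ext), and whose multiplication
   is componentwise on pure tensors.  (Quantifying the universal property
   over k-algebra targets is equivalent to quantifying over all k-modules,
   via the trivial extension k (+) V.) *)
Record tensor (A B : pzAlg) := Tensor {
  tT :> pzAlg;
  tens : A -> B -> tT;
  tens_bilinear : is_bilinear tens;
  tens_mul : forall a b c d, tens a b * tens c d = tens (a * c) (b * d);
  tens_one : tens 1 1 = 1;
  tlift : forall V : pzAlg, (A -> B -> V) -> tT -> V;
  tlift_linear : forall (V : pzAlg) (f : A -> B -> V),
      is_bilinear f -> is_linear (tlift f);
  tlift_tens : forall (V : pzAlg) (f : A -> B -> V),
      is_bilinear f -> forall a b, tlift f (tens a b) = f a b;
  tens_ext : forall (V : pzAlg) (g h : tT -> V),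
      is_linear g -> is_linear h ->
      (forall a b, g (tens a b) = h (tens a b)) -> forall x, g x = h x
}.

Arguments tlift {A B} t {V}.

Section Maps.
Variables A B C D : pzAlg.

Definition tmap (t1 : tensor A B) (t2 : tensor C D) (f : A -> C) (g : B -> D)
  : t1 -> t2 := tlift t1 (fun a b => tens t2 (f a) (g b)).
End Maps.
Arguments tmap {A B C D} t1 t2 f g _.

Section Maps2.
Variables A B : pzAlg.

Definition idDelta (tAB : tensor A B) (tBB : tensor B B) (tABB : tensor tAB B)
  (Dl : B -> tBB) : tAB -> tABB :=
  tlift tAB (fun a b => tmap tBB tABB (tens tAB a) id (Dl b)).

(* id (x) eps : A (x) B -> A (= A (x) k),  a (x) b |-> eps(b) a *)
Definition rcounit (tAB : tensor A B) (eps : B -> kAlg) : tAB -> A :=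
  tlift tAB (fun a b => eps b *s a).
End Maps2.
Arguments idDelta {A B} tAB tBB tABB Dl _.
Arguments rcounit {A B} tAB eps _.

Section Hopf.
Variables (H : pzAlg) (hh : tensor H H) (hhh : tensor hh H).

Definition lcounit (eps : H -> kAlg) : hh -> H :=
  tlift hh (fun a b => eps a *s b).

Definition is_hopf (DH : H -> hh) (eps : H -> kAlg) (S : H -> H) : Prop :=
  [/\ is_alg_morph DH, is_alg_morph eps,
      (forall h, tmap hh hhh DH id (DH h) = idDelta hh hh hhh DH (DH h)),
      (forall h, lcounit eps (DH h) = h /\ rcounit hh eps (DH h) = h)
    & [/\ is_linear S,
          (forall h, tlift hh (fun a b => S a * b) (DH h) = eps h *s 1)
        & (forall h, tlift hh (fun a b => a * S b) (DH h) = eps h *s 1)]].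

Variables (E : pzAlg) (eh : tensor E H) (ehh : tensor eh H).
Variables (DH : H -> hh) (eps : H -> kAlg) (DE : E -> eh).

Definition is_comod_alg : Prop :=
  [/\ is_alg_morph DE,
      (forall x, tmap eh ehh DE id (DE x) = idDelta eh hh ehh DH (DE x))
    & (forall x, rcounit eh eps (DE x) = x)].

(* (E, DM), with E acting on itself by right multiplication, is an
   (H,E)-Hopf module: DM is a (k-linear, coassociative, counital) right
   H-comodule structure with DM (m s) = DM(m) DE(s).  (The right E-module
   axioms hold automatically for right multiplication.) *)
Definition is_EH_hopf_module (DM : E -> eh) : Prop :=
  [/\ is_linear DM,
      (forall m, tmap eh ehh DM id (DM m) = idDelta eh hh ehh DH (DM m)),
      (forall m, rcounit eh eps (DM m) = m)
    & (forall m s, DM (m * s) = DM m * DE s)].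

Definition is_EH_hopf_morph (DM DM' : E -> eh) (f : E -> E) : Prop :=
  [/\ is_linear f, (forall m s, f (m * s) = f m * s)
    & (forall m, DM' (f m) = tmap eh eh f id (DM m))].

Definition EH_hopf_iso (DM DM' : E -> eh) : Prop :=
  exists f g : E -> E,
    [/\ is_EH_hopf_morph DM DM' f, is_EH_hopf_morph DM' DM g,
        (forall m, g (f m) = m) & (forall m, f (g m) = m)].

Definition is_unit_of (R : pzRingType) (x : R) : Prop :=
  exists y, x * y = 1 /\ y * x = 1.

Definition d0 (X : eh) : ehh := tmap eh ehh DE id X.
Definition d1 (X : eh) : ehh := idDelta eh hh ehh DH X.
Definition d2 (X : eh) : ehh := tens ehh X 1.

Definition Z1 (X : eh) : Prop := is_unit_of X /\ d2 X * d0 X = d1 X.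

(* X' = d^1(x^{-1}) X d^0(x) for some unit x of E, d^1(y) = y (x) 1 *)
Definition cohomologous (X X' : eh) : Prop :=
  exists x xinv : E, [/\ x * xinv = 1, xinv * x = 1
                       & X' = tens eh xinv 1 * X * DE x].

Definition twisted (X : eh) : E -> eh := fun x => X * DE x.
End Hopf.
End Defs.

Arguments is_hopf {k H} hh hhh DH eps S.
Arguments is_comod_alg {k H} hh {E} eh ehh DH eps DE.
Arguments is_EH_hopf_module {k H} hh {E} eh ehh DH eps DE DM.
Arguments is_EH_hopf_morph {k H E} eh DM DM' f.
Arguments EH_hopf_iso {k H E} eh DM DM'.
Arguments d0 {k H E} eh ehh DE X.
Arguments d1 {k H} hh {E} eh ehh DH X.
Arguments d2 {k H E} eh ehh X.
Arguments Z1 {k H} hh {E} eh ehh DH DE X.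
Arguments cohomologous {k H E} eh DE X X'.
Arguments twisted {k H E} eh DE X _.

(* - elementary facts on the scalar action and on k-linear maps;
   - the tensor calculus: linear maps agreeing on pure tensors are equal,
     f (x) g and id (x) eps are linear and multiplicative, and the coface
     maps d^0, d^1, d^2 of the cobar complex are multiplicative and are
     retracted by id (x) eps;
   - part (1): Delta^X is always linear and E-compatible; it is coassociative
     exactly when d^2(X) d^0(X) = d^1(X) (evaluate at m = 1 for the converse),
     and the cocycle identity forces (id (x) eps)(X) = 1, hence counitality;
   - part (2): a Hopf-module endomorphism of E is left multiplication by
     u = f(1), and left multiplication by u is a morphism from Delta^X to
     Delta^X' iff X' Delta_E(u) = (u (x) 1) X; isomorphisms are thus exactly
     the units u with X' = d^1(u) X d^0(u^-1), i.e. cohomologies. *)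
From HB Require Import structures.
From mathcomp Require Import all_boot all_order all_algebra.
Set Implicit Arguments.
Unset Strict Implicit.
Unset Printing Implicit Defensive.
Import GRing.Theory.
Local Open Scope ring_scope.

(* Restore the explicit source and target tensor products of the structure
   maps, as in their definitions, so that they can be named in statements. *)
#[local] Arguments tmap {k A B C D} t1 t2 f g _.
#[local] Arguments idDelta {k A B} tAB tBB tABB Dl _.
#[local] Arguments rcounit {k A B} tAB eps _.

Section ScalarAction.
Variables (k : comPzRingType) (A : pzAlg k).
Local Notation "a *s x" := (asc a x) (at level 40).

Lemma asc1 (x : A) : 1 *s x = x.
Proof. by rewrite /asc aeta1 mul1r. Qed.

Lemma asc0 (a : k) : a *s (0 : A) = 0.
Proof. by rewrite /asc mulr0. Qed.

Lemma ascA a b (x : A) : a *s (b *s x) = (a * b) *s x.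
Proof. by rewrite /asc aetaM mulrA. Qed.

Lemma ascDr a (x y : A) : a *s (x + y) = a *s x + a *s y.
Proof. by rewrite /asc mulrDr. Qed.

Lemma ascDl a b (x : A) : (a + b) *s x = a *s x + b *s x.
Proof. by rewrite /asc aetaD mulrDl. Qed.

Lemma ascMl a (x y : A) : (a *s x) * y = a *s (x * y).
Proof. by rewrite /asc mulrA. Qed.

Lemma ascMr a (x y : A) : x * (a *s y) = a *s (x * y).
Proof. by rewrite /asc mulrA -aeta_central -mulrA. Qed.
End ScalarAction.

Section LinearMaps.
Variables (k : comPzRingType) (U V W : pzAlg k).
Local Notation "a *s x" := (asc a x) (at level 40).

Lemma linear0 (f : U -> V) : is_linear f -> f 0 = 0.
Proof.
move=> fL; have := fL 1 0 0; rewrite asc0 addr0 asc1 => f0.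
by apply: (addrI (f 0)); rewrite addr0 -f0.
Qed.

Lemma linearZs (f : U -> V) : is_linear f -> forall a u, f (a *s u) = a *s f u.
Proof. by move=> fL a u; have := fL a u 0; rewrite !addr0 (linear0 fL) addr0. Qed.

Lemma linear_id : is_linear (@id U).
Proof. by []. Qed.

Lemma linear_comp (f : U -> V) (g : V -> W) :
  is_linear f -> is_linear g -> is_linear (fun u => g (f u)).
Proof. by move=> fL gL a u v; rewrite fL gL. Qed.

Lemma linear_mull (y : V) (f : U -> V) :
  is_linear f -> is_linear (fun u => y * f u).
Proof. by move=> fL a u v; rewrite fL mulrDr ascMr. Qed.

Lemma linear_mulr (y : V) (f : U -> V) :
  is_linear f -> is_linear (fun u => f u * y).
Proof. by move=> fL a u v; rewrite fL mulrDl ascMl. Qed.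

Lemma linear_add (f g : U -> V) :
  is_linear f -> is_linear g -> is_linear (fun u => f u + g u).
Proof. by move=> fL gL a u v; rewrite fL gL ascDr addrACA. Qed.

Lemma linear_scale c (f : U -> V) : is_linear f -> is_linear (fun u => c *s f u).
Proof. by move=> fL a u v; rewrite fL ascDr !ascA mulrC. Qed.
End LinearMaps.
Arguments linear_id {k U}.

Section TensorCalculus.
Variable k : comPzRingType.
Local Notation "a *s x" := (asc a x) (at level 40).

Lemma tens_linearl (A B : pzAlg k) (t : tensor A B) b :
  is_linear (fun a => tens t a b).
Proof. by case: (tens_bilinear t). Qed.

Lemma tens_linearr (A B : pzAlg k) (t : tensor A B) a : is_linear (tens t a).
Proof. by case: (tens_bilinear t). Qed.

Lemma tens_ext2 (A B C D V : pzAlg k) (t1 : tensor A B) (t2 : tensor C D)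
    (F G : t1 -> t2 -> V) :
  (forall y, is_linear (F y)) -> (forall z, is_linear (fun y => F y z)) ->
  (forall y, is_linear (G y)) -> (forall z, is_linear (fun y => G y z)) ->
  (forall a b c d, F (tens t1 a b) (tens t2 c d) = G (tens t1 a b) (tens t2 c d)) ->
  forall y z, F y z = G y z.
Proof.
move=> FL1 FL2 GL1 GL2 FG y z.
apply: (tens_ext (g := fun y => F y z) (h := fun y => G y z)) => // a b.
by apply: (tens_ext (g := F (tens t1 a b)) (h := G (tens t1 a b))).
Qed.

Lemma tens_multiplicative (A B V : pzAlg k) (t : tensor A B) (phi : t -> V) :
  is_linear phi ->
  (forall a b c d,
     phi (tens t a b * tens t c d) = phi (tens t a b) * phi (tens t c d)) ->
  forall y z, phi (y * z) = phi y * phi z.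
Proof.
move=> phiL phiM.
apply: (tens_ext2 (F := fun y z => phi (y * z)) (G := fun y z => phi y * phi z)) => //.
- by move=> y; apply: linear_comp phiL; apply: linear_mull.
- by move=> z; apply: (linear_comp (f := fun y => y * z)) phiL; apply: linear_mulr.
- by move=> y; apply: linear_mull.
- by move=> z; apply: linear_mulr.
Qed.

Section TensorMaps.
Variables (A B C D : pzAlg k) (t1 : tensor A B) (t2 : tensor C D).
Variables (f : A -> C) (g : B -> D).
Hypotheses (fL : is_linear f) (gL : is_linear g).

Lemma tmap_bilinear : is_bilinear (fun a b => tens t2 (f a) (g b)).
Proof.
split=> [b|a] c x y /=.
- by rewrite fL; apply: tens_linearl.
- by rewrite gL; apply: tens_linearr.
Qed.

Lemma tmapE a b : tmap t1 t2 f g (tens t1 a b) = tens t2 (f a) (g b).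
Proof. by rewrite /tmap tlift_tens //; apply: tmap_bilinear. Qed.

Lemma tmap_linear : is_linear (tmap t1 t2 f g).
Proof. by apply: tlift_linear; apply: tmap_bilinear. Qed.

Lemma tmap_mul :
  (forall x y, f (x * y) = f x * f y) -> (forall x y, g (x * y) = g x * g y) ->
  forall y z, tmap t1 t2 f g (y * z) = tmap t1 t2 f g y * tmap t1 t2 f g z.
Proof.
move=> fM gM; apply: tens_multiplicative; first exact: tmap_linear.
by move=> a b c d; rewrite tens_mul !tmapE fM gM tens_mul.
Qed.
End TensorMaps.

Lemma tmap_lmul (A B C : pzAlg k) (t1 : tensor A B) (t2 : tensor C B)
    (c : C) (f f0 : A -> C) :
  is_linear f -> is_linear f0 -> (forall a, f a = c * f0 a) ->
  forall y, tmap t1 t2 f id y = tens t2 c 1 * tmap t1 t2 f0 id y.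
Proof.
move=> fL f0L fE; apply: tens_ext.
- exact: tmap_linear.
- by apply: linear_mull; apply: tmap_linear.
- by move=> a b; rewrite !tmapE // fE tens_mul mul1r.
Qed.

Lemma tmap_ext (A B C D : pzAlg k) (t1 : tensor A B) (t2 : tensor C D)
    (f f' : A -> C) (g : B -> D) :
  is_linear f -> is_linear f' -> is_linear g -> f =1 f' ->
  forall y, tmap t1 t2 f g y = tmap t1 t2 f' g y.
Proof.
move=> fL f'L gL ff'; apply: tens_ext; try exact: tmap_linear.
by move=> a b; rewrite !tmapE // ff'.
Qed.

Lemma tmap_id (A B : pzAlg k) (t : tensor A B) y : tmap t t id id y = y.
Proof.
apply: (tens_ext (h := id)) => // [|a b]; first exact: tmap_linear.
by rewrite tmapE.
Qed.

Section Counit.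
Variables (A B : pzAlg k) (t : tensor A B) (eps : B -> kAlg k).
Hypothesis epsM : is_alg_morph eps.

Lemma rcounit_bilinear : is_bilinear (fun (a : A) b => eps b *s a).
Proof.
have [epsL _ _] := epsM.
split=> [b|a] c x y; first by rewrite ascDr !ascA mulrC.
by rewrite epsL ascDl -ascA.
Qed.

Lemma rcounitE a b : rcounit t eps (tens t a b) = eps b *s a.
Proof. by rewrite /rcounit tlift_tens //; apply: rcounit_bilinear. Qed.

Lemma rcounit_linear : is_linear (rcounit t eps).
Proof. by apply: tlift_linear; apply: rcounit_bilinear. Qed.

Lemma rcounit_mul y z : rcounit t eps (y * z) = rcounit t eps y * rcounit t eps z.
Proof.
have [_ epsMul _] := epsM.
move: y z; apply: tens_multiplicative; first exact: rcounit_linear.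
by move=> a b c d; rewrite tens_mul !rcounitE epsMul ascMl ascMr ascA.
Qed.

Lemma rcounit1 : rcounit t eps 1 = 1.
Proof. by have [_ _ eps1] := epsM; rewrite -(tens_one t) rcounitE eps1 asc1. Qed.
End Counit.
End TensorCalculus.

Section CofaceMaps.
Variables (k : comPzRingType) (H E : pzAlg k).
Variables (hh : tensor H H) (eh : tensor E H) (ehh : tensor eh H).
Variables (DH : H -> hh) (eps : H -> kAlg k).
Hypotheses (DHL : is_linear DH) (DHM : forall x y, DH (x * y) = DH x * DH y).
Hypotheses (epsM : is_alg_morph eps) (DH_rcounit : forall h, rcounit hh eps (DH h) = h).

Local Notation iota a := (tmap hh ehh (tens eh a) id).

Lemma iota_linear a : is_linear (iota a).
Proof. exact (tmap_linear ehh (tens_linearr eh a) linear_id). Qed.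

Lemma iota_linear_in_a W : is_linear (fun a => iota a W).
Proof.
move=> c u v; move: W; apply: tens_ext.
- exact: iota_linear.
- by apply: linear_add; [apply: linear_scale|]; apply: iota_linear.
- move=> h1 h2; rewrite !tmapE //; try exact: tens_linearr.
  by rewrite (tens_linearl eh h1) (tens_linearl ehh h2).
Qed.

Lemma d1_bilinear : is_bilinear (fun a b => iota a (DH b)).
Proof.
split=> [b|a]; first exact: iota_linear_in_a.
exact: linear_comp DHL (iota_linear a).
Qed.

Lemma d1E a b : d1 hh eh ehh DH (tens eh a b) = iota a (DH b).
Proof. by rewrite /d1 /idDelta tlift_tens //; apply: d1_bilinear. Qed.

Lemma d1_linear : is_linear (d1 hh eh ehh DH).
Proof. by apply: tlift_linear; apply: d1_bilinear. Qed.

Lemma iota_mul a c U V : iota (a * c) (U * V) = iota a U * iota c V.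
Proof.
move: U V.
apply: (tens_ext2 (F := fun U V => iota (a * c) (U * V))
                  (G := fun U V => iota a U * iota c V)).
- by move=> y; apply: (linear_comp _ (iota_linear _)); apply: linear_mull.
- by move=> z; apply: (linear_comp (f := fun y => y * z) _ (iota_linear _)); apply: linear_mulr.
- by move=> y; apply: linear_mull (iota_linear _).
- by move=> z; apply: linear_mulr (iota_linear _).
- move=> h1 h2 h3 h4; rewrite tens_mul !tmapE //; try exact: tens_linearr.
  by rewrite !tens_mul.
Qed.

Lemma d1_mul y z :
  d1 hh eh ehh DH (y * z) = d1 hh eh ehh DH y * d1 hh eh ehh DH z.
Proof.
move: y z; apply: tens_multiplicative; first exact: d1_linear.
by move=> a b c d; rewrite tens_mul !d1E DHM iota_mul.
Qed.

Lemma rcounit_d1 Y : rcounit ehh eps (d1 hh eh ehh DH Y) = Y.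
Proof.
move: Y; apply: (tens_ext (h := id)) => // [|a b].
  exact: linear_comp d1_linear (rcounit_linear epsM).
rewrite d1E; move: (DH b) (DH_rcounit b) => W <-; move: W.
apply: tens_ext.
- exact: linear_comp (iota_linear a) (rcounit_linear epsM).
- exact: linear_comp (rcounit_linear epsM) (tens_linearr _ _).
- move=> h1 h2; rewrite tmapE //; last exact: tens_linearr.
  by rewrite !rcounitE // (linearZs (tens_linearr _ _)).
Qed.

Lemma rcounit_d0 (DE : E -> eh) : is_linear DE ->
  forall Y, rcounit ehh eps (d0 eh ehh DE Y) = DE (rcounit eh eps Y).
Proof.
move=> DEL; apply: tens_ext.
- exact: linear_comp (tmap_linear ehh DEL linear_id) (rcounit_linear epsM).
- exact: linear_comp (rcounit_linear epsM) DEL.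
- by move=> a b; rewrite /d0 tmapE // !rcounitE // (linearZs DEL).
Qed.

Lemma rcounit_d2 X : rcounit ehh eps (d2 eh ehh X) = X.
Proof. by have [_ _ eps1] := epsM; rewrite rcounitE // eps1 asc1. Qed.
End CofaceMaps.

Section TwistedCoaction.
Variables (k : comPzRingType) (H E : pzAlg k).
Variables (hh : tensor H H) (eh : tensor E H) (ehh : tensor eh H).
Variables (DH : H -> hh) (eps : H -> kAlg k) (DE : E -> eh).
Hypotheses (DHL : is_linear DH) (DHM : forall x y, DH (x * y) = DH x * DH y).
Hypotheses (epsM : is_alg_morph eps) (DH_rcounit : forall h, rcounit hh eps (DH h) = h).
Hypothesis DEcomod : is_comod_alg hh eh ehh DH eps DE.

Local Notation d0 := (d0 eh ehh DE).
Local Notation d1 := (d1 hh eh ehh DH).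
Local Notation d2 := (d2 eh ehh).
Local Notation twisted := (twisted eh DE).

Lemma DE_linear : is_linear DE.
Proof. by case: DEcomod => -[]. Qed.

Lemma DE_mul x y : DE (x * y) = DE x * DE y.
Proof. by case: DEcomod => -[]. Qed.

Lemma DE1 : DE 1 = 1.
Proof. by case: DEcomod => -[]. Qed.

Lemma d0_mul : forall y z, d0 (y * z) = d0 y * d0 z.
Proof. exact: (tmap_mul ehh DE_linear linear_id DE_mul (fun _ _ => erefl)). Qed.

Lemma twisted_linear X : is_linear (twisted X).
Proof. exact: linear_mull DE_linear. Qed.

Lemma tmap_twisted X Y : tmap eh ehh (twisted X) id Y = d2 X * d0 Y.
Proof. by apply: tmap_lmul => //; [apply: twisted_linear | apply: DE_linear]. Qed.

Lemma twisted_coassocP X :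
  (forall m, tmap eh ehh (twisted X) id (twisted X m)
             = idDelta eh hh ehh DH (twisted X m)) <->
  d2 X * d0 X = d1 X.
Proof.
have [_ DEcoass _] := DEcomod.
split=> [coass | cocycle m].
  by have := coass 1; rewrite tmap_twisted /twisted DE1 mulr1.
rewrite tmap_twisted /twisted d0_mul mulrA cocycle.
by rewrite [d0 _]DEcoass -(d1_mul ehh DHL DHM).
Qed.

Lemma cocycle_rcounit X : is_unit_of X -> d2 X * d0 X = d1 X ->
  rcounit eh eps X = 1.
Proof.
have [_ _ DEcounit] := DEcomod.
move=> [Xinv [_ XinvX]] cocycle.
have := rcounit_d1 ehh DHL epsM DH_rcounit X.
rewrite -cocycle (rcounit_mul epsM) (rcounit_d2 ehh epsM) (rcounit_d0 ehh epsM DE_linear).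
move=> XDE; have DE_eq1 : DE (rcounit eh eps X) = 1.
  by rewrite -[DE _]mul1r -XinvX -mulrA XDE.
by rewrite -(DEcounit (rcounit eh eps X)) DE_eq1 (rcounit1 _ epsM).
Qed.

Lemma cocycle_iff_twisted_hopf_module X : is_unit_of X ->
  Z1 hh eh ehh DH DE X <-> is_EH_hopf_module hh eh ehh DH eps DE (twisted X).
Proof.
have [_ _ DEcounit] := DEcomod.
move=> Xunit; split=> [[_ cocycle] | [_ coass _ _]]; last first.
  by split=> //; apply/twisted_coassocP.
split.
- exact: twisted_linear.
- exact/twisted_coassocP.
- move=> m; rewrite /twisted (rcounit_mul epsM).
  by rewrite (cocycle_rcounit Xunit cocycle) mul1r DEcounit.
- by move=> m s; rewrite /twisted DE_mul mulrA.
Qed.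

Lemma hopf_morph_lmulE (DM DM' : E -> eh) f :
  is_EH_hopf_morph eh DM DM' f -> forall m, f m = f 1 * m.
Proof. by move=> [_ fE _] m; rewrite -fE mul1r. Qed.

Lemma lmul_linear (u : E) : is_linear (fun m => u * m).
Proof. exact: linear_mull. Qed.

Lemma hopf_morph_lmul (DM DM' : E -> eh) f :
  is_EH_hopf_morph eh DM DM' f -> is_EH_hopf_morph eh DM DM' (fun m => f 1 * m).
Proof.
move=> fM; have fE := hopf_morph_lmulE fM; have [fL _ colin] := fM.
split=> [|m s|m]; first exact: lmul_linear.
  by rewrite mulrA.
by rewrite -fE colin (tmap_ext _ fL (lmul_linear _) linear_id fE).
Qed.

Lemma lmul_hopf_morphP X X' (u : E) :
  is_EH_hopf_morph eh (twisted X) (twisted X') (fun m => u * m) <->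
  X' * DE u = tens eh u 1 * X.
Proof.
have tmapL m : tmap eh eh (fun m => u * m) id (twisted X m) = tens eh u 1 * twisted X m.
  by rewrite (tmap_lmul eh (lmul_linear u) linear_id (fun _ => erefl)) tmap_id.
split=> [[_ _ colin] | intertwine].
  by have := colin 1; rewrite tmapL /twisted DE1 !mulr1.
split=> [|m s|m]; first exact: lmul_linear.
  by rewrite mulrA.
by rewrite tmapL /twisted DE_mul !mulrA intertwine.
Qed.

Lemma cohomologous_iff_twisted_iso X X' :
  cohomologous eh DE X X' <-> EH_hopf_iso eh (twisted X) (twisted X').
Proof.
split=> [[x [xinv [xxinv xinvx ->]]] | [f [g [fM gM gf fg]]]].
  exists (fun m => xinv * m), (fun m => x * m); split.
  - apply/lmul_hopf_morphP.
    by rewrite -!mulrA -DE_mul xxinv DE1 mulr1.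
  - apply/lmul_hopf_morphP.
    by rewrite !mulrA tens_mul xxinv mul1r tens_one mul1r.
  - by move=> m; rewrite mulrA xxinv mul1r.
  - by move=> m; rewrite mulrA xinvx mul1r.
have fE := hopf_morph_lmulE fM; have gE := hopf_morph_lmulE gM.
have fg1 : f 1 * g 1 = 1 by rewrite -fE fg.
have gf1 : g 1 * f 1 = 1 by rewrite -gE gf.
have /lmul_hopf_morphP intertwine := hopf_morph_lmul fM.
exists (g 1), (f 1); split=> //.
by rewrite -intertwine -mulrA -DE_mul fg1 DE1 mulr1.
Qed.
End TwistedCoaction.

Theorem proposition1p7 (k : comPzRingType) (H E : pzAlg k)
  (hh : tensor H H) (hhh : tensor hh H) (eh : tensor E H) (ehh : tensor eh H)
  (DH : H -> hh) (eps : H -> kAlg k) (S : H -> H) (DE : E -> eh) :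
  is_hopf hh hhh DH eps S ->
  is_comod_alg hh eh ehh DH eps DE ->
  (forall X : eh, is_unit_of X ->
     (Z1 hh eh ehh DH DE X <->
      is_EH_hopf_module hh eh ehh DH eps DE (twisted eh DE X)))
  /\
  (forall X X' : eh, Z1 hh eh ehh DH DE X -> Z1 hh eh ehh DH DE X' ->
     (cohomologous eh DE X X' <->
      EH_hopf_iso eh (twisted eh DE X) (twisted eh DE X'))).
Proof.
move=> [[DHL DHM _] epsM _ counit _] DEcomod.
have DH_rcounit h : rcounit hh eps (DH h) = h by have [] := counit h.
split=> [X | X X' _ _].
- exact: cocycle_iff_twisted_hopf_module DHL DHM epsM DH_rcounit DEcomod X.
- exact: cohomologous_iff_twisted_iso DEcomod X X'.
Qed.
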